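(* If $S(A)$ is an independent Stanley sequence, then $\omega(A)<\lambda(A)$ (equivalently, every element of the omitted set $O(A)$ is less than $\lambda(A)$).
   Context: A set of non-negative integers is 3-free if no three of its elements form an arithmetic progression. For a finite 3-free set $A=\{a_0<\cdots<a_k\}$ of non-negative integers, the Stanley sequence $S(A)=(a_n)_{n\ge0}$ is the increasing sequence with initial terms $a_0,\ldots,a_k$ in which each subsequent $a_{n+1}$ is the smallest integer greater than $a_n$ such that $\{a_0,\ldots,a_{n+1}\}$ is 3-free. Throughout, Stanley sequences are in root position ($a_0=0$). An integer $x$ is covered by a set $S$ if there exist $s<t$ in $S$ with $2t-s=x$. The omitted set $O(A)$ is the set of non-negative integers neither in $S(A)$ nor covered by $S(A)$; $\omega(A)$ is its largest element. A Stanley sequence $(a_n)$ is independent with character $\lambda(A)=\lambda$ if for all sufficiently large $k$: $a_{2^k+i}=a_{2^k}+a_i$ for $0\le i<2^k$, and $a_{2^k}=2a_{2^k-1}-\lambda+1$. *)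

From mathcomp Require Import all_boot all_order all_algebra.
Set Implicit Arguments. Unset Strict Implicit. Unset Printing Implicit Defensive.

Definition three_free (l : seq nat) : Prop :=
  forall x y z, x \in l -> y \in l -> z \in l -> x < y -> y < z ->
    x + z <> 2 * y.

Definition prefix_set (s : nat -> nat) (n : nat) : seq nat :=
  map s (iota 0 n.+1).

Definition root_3free_set (A : seq nat) : Prop :=
  [/\ A != [::], sorted ltn A, nth 0 A 0 = 0 & three_free A].

Definition stanley_seq (A : seq nat) (s : nat -> nat) : Prop :=
  (forall i, i < size A -> s i = nth 0 A i) /\
  (forall n, size A <= n.+1 ->
     [/\ s n < s n.+1,
         three_free (prefix_set s n.+1) &
         forall m, s n < m -> m < s n.+1 -> ~ three_free (rcons (prefix_set s n) m)]).

Definition in_seq (s : nat -> nat) (x : nat) : Prop := exists i, s i = x.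

Definition covered (s : nat -> nat) (x : nat) : Prop :=
  exists i j, s i < s j /\ x + s i = 2 * s j.

Definition omitted (s : nat -> nat) (x : nat) : Prop :=
  ~ in_seq s x /\ ~ covered s x.

Definition independent_with_character (s : nat -> nat) (lam : int) : Prop :=
  exists K, forall k, K <= k ->
    (forall i, i < 2 ^ k -> s (2 ^ k + i) = s (2 ^ k) + s i) /\
    ((s (2 ^ k)%N)%:Z = (2 * s (2 ^ k).-1)%N%:Z - lam + 1)%R.

(* Suppose some omitted x satisfied lam <= x.  Take a block start N = 2^k far out, let
   a = s (N-1), so that s N = 2a - lam + 1, and put m = s N + x.  Independence makes the
   terms in [N, 2N) the translates s N + s i, so m is not a term (x is not), and m lies
   strictly between two consecutive terms s n < m < s (n+1) with N <= n < 2N - 1.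
   Greedy construction then forces some u < t among s 0, ..., s n with u + m = 2t.
   But t < N is impossible because m > 2a (this is where lam <= x is used), u < N <= t is
   impossible because s N is much larger than a + x, and u, t >= N would translate back to
   s i + x = 2 s j with s i < s j, i.e. x would be covered. *)
From mathcomp Require Import all_boot all_order all_algebra.
From mathcomp Require Import zify.

Lemma prefix_setP s n v : reflect (exists2 i, i <= n & v = s i) (v \in prefix_set s n).
Proof.
apply: (iffP mapP) => [[i] | [i le_in ->]].
  by rewrite mem_iota add0n ltnS => /andP[_ le_in] ->; exists i.
by exists i; rewrite // mem_iota add0n ltnS.
Qed.

Lemma three_free_rcons l m :
  three_free l -> (forall v, v \in l -> v < m) ->
  (forall u t, u \in l -> t \in l -> u < t -> u + m <> 2 * t) ->
  three_free (rcons l m).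
Proof.
move=> l3 l_lt_m no_AP u t z.
rewrite !mem_rcons !in_cons => /predU1P u_in /predU1P t_in /predU1P[->|z_in] ut tz.
- have t_l : t \in l by case: t_in => // E; move: tz; rewrite E ltnn.
  have u_l : u \in l by case: u_in => // E; move: (ltn_trans ut tz); rewrite E ltnn.
  exact: no_AP.
- have z_lt_m := l_lt_m z z_in.
  have t_l : t \in l by case: t_in => // E; move: (ltn_trans tz z_lt_m); rewrite E ltnn.
  have u_l : u \in l.
    by case: u_in => // E; move: (ltn_trans ut (ltn_trans tz z_lt_m)); rewrite E ltnn.
  exact: l3.
Qed.

Section IncreasingSequence.

Context {s : nat -> nat}.
Hypothesis s_incr : forall i, s i < s i.+1.

Lemma incr_leq_mono : {mono s : i j / i <= j}.
Proof. exact/leq_mono/(homo_ltn ltn_trans). Qed.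

Lemma incr_ltn_mono : {mono s : i j / i < j}.
Proof. exact/leqW_mono/incr_leq_mono. Qed.

Lemma incr_geq_id i : i <= s i.
Proof. by elim: i => // i IHi; apply: leq_ltn_trans IHi (s_incr i). Qed.

Lemma incr_bracket m p :
  s p <= m -> ~ in_seq s m -> exists2 n, p <= n & s n < m < s n.+1.
Proof.
move=> sp_le_m m_notin.
have exP : exists n, s n <= m by exists p.
have ubP n : s n <= m -> n <= m by move/(leq_trans (incr_geq_id n)).
case: (ex_maxnP exP ubP) => n sn_le_m max_n.
have sn_neq k : s k != m by apply/eqP => E; apply: m_notin; exists k.
exists n; first exact: max_n.
rewrite ltn_neqAle sn_neq sn_le_m /= ltnNge.
by apply/negP => /max_n; rewrite ltnn.
Qed.

End IncreasingSequence.

Section IndependentBlock.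

Context {s : nat -> nat} {N x : nat}.
Hypothesis s_incr : forall i, s i < s i.+1.
Hypothesis N_gt0 : 0 < N.
Hypothesis s_block : forall i, i < N -> s (N + i) = s N + s i.

Let a := s N.-1.

Lemma block_term j : N <= j -> j < N + N -> s j = s N + s (j - N).
Proof. by move=> le_Nj lt_j2N; rewrite -{1}(subnKC le_Nj) s_block //; lia. Qed.

Lemma last_before_block_lt : a < s N.
Proof. by rewrite /a incr_ltn_mono // prednK. Qed.

Lemma term_before_block_le j : j < N -> s j <= a.
Proof. by move=> lt_jN; rewrite /a incr_leq_mono // -ltnS prednK. Qed.

Lemma shift_not_in_seq : ~ in_seq s x -> x < a -> ~ in_seq s (s N + x).
Proof.
move=> x_notin x_lt_a [j sj_eq].
have sN_lt := last_before_block_lt.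
case: (ltnP j N) => [lt_jN | le_Nj].
  by have := term_before_block_le _ lt_jN; lia.
case: (ltnP j (N + N.-1)) => [lt_j | le_j].
  apply: x_notin; exists (j - N); apply/eqP.
  by rewrite -(eqn_add2l (s N)) -block_term ?sj_eq //; lia.
have := incr_leq_mono s_incr (N + N.-1) j; rewrite le_j s_block ?prednK // -/a.
lia.
Qed.

Lemma shift_no_AP_top :
  ~ covered s x -> 2 * a < s N + x -> a + x < s N ->
  forall i j, i < j -> j < N + N -> s i + (s N + x) <> 2 * s j.
Proof.
move=> x_uncov m_gt_2a big_sN i j lt_ij lt_j2N AP.
case: (ltnP j N) => [lt_jN | le_Nj].
  by have := term_before_block_le _ lt_jN; lia.
move: AP; rewrite (block_term _ le_Nj lt_j2N).
case: (ltnP i N) => [lt_iN | le_Ni].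
  by have := term_before_block_le _ lt_iN; lia.
rewrite (block_term _ le_Ni) ?(ltn_trans lt_ij) // => AP.
apply: x_uncov; exists (i - N), (j - N); split; last by lia.
by rewrite incr_ltn_mono //; lia.
Qed.

End IndependentBlock.

Section Stanley.

Context {A : seq nat} {s : nat -> nat}.
Hypothesis A_root3free : root_3free_set A.
Hypothesis s_stanley : stanley_seq A s.

Lemma stanley_incr i : s i < s i.+1.
Proof.
case: A_root3free s_stanley => _ A_sorted _ _ [s_init s_greedy].
case: (ltnP i.+1 (size A)) => [lt_iA | le_Ai]; last by case: (s_greedy i le_Ai).
rewrite !s_init ?(ltnW lt_iA) //.
by apply: (sorted_ltn_nth ltn_trans); rewrite ?inE ?(ltnW lt_iA).
Qed.

Lemma stanley_prefix_three_free n : size A <= n -> three_free (prefix_set s n).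
Proof.
case: A_root3free s_stanley => A_nil _ _ _ [_ s_greedy] le_An.
have n_gt0 : 0 < n by apply: leq_trans le_An; rewrite lt0n size_eq0.
by case: (s_greedy n.-1); rewrite prednK.
Qed.

Lemma stanley_gap_not_three_free n m :
  size A <= n.+1 -> s n < m < s n.+1 -> ~ three_free (rcons (prefix_set s n) m).
Proof.
case: s_stanley => _ s_greedy le_An /andP[lo hi].
by case: (s_greedy n le_An) => _ _; apply.
Qed.

End Stanley.

Theorem mainTheorem11 (A : seq nat) (s : nat -> nat) (lam : int) :
  root_3free_set A -> stanley_seq A s -> independent_with_character s lam ->
  forall x : nat, omitted s x -> (x%:Z < lam)%R.
Proof.
move=> A_root3free s_stanley [K s_indep] x [x_notin x_uncov].
rewrite Order.TotalTheory.ltNge; apply/negP => lam_le_x.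
have s_incr := stanley_incr A_root3free s_stanley.
set k := maxn K (size A + 2 * x + 2).
have [s_block char_eq] := s_indep k (leq_maxl _ _).
set N := 2 ^ k in s_block char_eq.
have N_big : size A + 2 * x + 2 < N.
  by apply: leq_ltn_trans (ltn_expl k (ltnSn 1)); apply: leq_maxr.
have N_gt0 : 0 < N by lia.
have a_big := incr_geq_id s_incr N.-1.
have m_gt_2a : 2 * s N.-1 < s N + x by lia.
have sN_big : s N.-1 + x < s N by lia.
have m_notin := shift_not_in_seq s_incr N_gt0 s_block x_notin ltac:(lia).
have [n le_Nn /andP[lo hi]] := incr_bracket s_incr _ _ (leq_addr x (s N)) m_notin.
have lt_n2N : n < N + N.
  have : s n < s (N + N.-1) by rewrite s_block ?prednK //; lia.
  by rewrite incr_ltn_mono //; lia.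
apply: (stanley_gap_not_three_free s_stanley n (s N + x)); rewrite ?lo ?hi //; first lia.
apply: three_free_rcons => [|v /prefix_setP[i le_in ->]|u t].
- by apply: (stanley_prefix_three_free A_root3free s_stanley); lia.
- by apply: leq_ltn_trans lo; rewrite incr_leq_mono.
move=> /prefix_setP[i le_in ->] /prefix_setP[j le_jn ->].
rewrite incr_ltn_mono // => lt_ij.
by apply: (shift_no_AP_top s_incr N_gt0 s_block x_uncov) => //; lia.
Qed.
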